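(* Let $\Omega$ be a finite set, $\mathcal C$ the set of all functions from the power set of $\Omega$ to $\mathbb R$, $\mathcal P\subseteq\mathcal C$ the set of probability functions, $M$ finite, and let $s:\mathcal C\to[-\infty,M]^\Omega$ be a scoring rule that is quasi-strictly proper and continuous on $\mathcal C$. Then either $E_p s(p)$ is infinite for some $p\in\mathcal P$, or both: (i) for any sequence $(p_n)$ in $\mathcal P$ converging to some $p\in\mathcal P$ such that $s(p_n)$ is finite for all $n$ while $s(p)$ is not finite, $\lim_n E_{p_n}s(p_n)=E_p s(p)$; and (ii) the set $F=s[\mathcal P]\cap\mathbb R^\Omega$ of finite scores of probabilities is dense in $\partial^+\operatorname{Conv}F$.
   Context: $\mathcal C$ is topologized as $\mathbb R^{2^\Omega}$ and $[-\infty,M]^\Omega$ with the product of the usual extended-real topology. For $p\in\mathcal P$ and $f:\Omega\to[-\infty,\infty]$, $E_p f=\sum_{\omega:\,p(\{\omega\})\neq0}p(\{\omega\})f(\omega)$. $s$ is proper if $E_p s(p)\ge E_p s(c)$ for all $p\in\mathcal P$, $c\in\mathcal C$; quasi-strictly proper if moreover the inequality is strict whenever $c\in\mathcal C\setminus\mathcal P$. A score is finite if all its values are finite. $\mathcal P$ carries the topology in which $p_n\to p$ iff $p_n(\{\omega\})\to p(\{\omega\})$ for every $\omega$. With $\langle f,g\rangle=\sum_\omega f(\omega)g(\omega)$ on $\mathbb R^\Omega$, a boundary point $z$ of $G\subseteq\mathbb R^\Omega$ is positive-facing if there exists $v\in(0,\infty)^\Omega$ with $\langle v,w\rangle\le\langle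 v,z\rangle$ for all $w\in G$; $\partial^+G$ denotes the set of such points. $\operatorname{Conv}F$ is the convex hull of $F$; $F$ dense in $B$ means every open set meeting $B$ meets $F$. *)

From HB Require Import structures.
From mathcomp Require Import all_boot all_order all_algebra.
From mathcomp Require Import all_classical all_reals all_analysis.
Set Implicit Arguments. Unset Strict Implicit. Unset Printing Implicit Defensive.
Import Order.TTheory GRing.Theory Num.Theory.
Import numFieldNormedType.Exports.
Local Open Scope ring_scope.

Section Defs.
Variables (R : realType) (Omega : finType).


Definition is_prob (p : {set Omega} -> R) : Prop :=
  [/\ forall A, 0 <= p A,
      p [set: Omega] = 1 &
      forall A B : {set Omega}, [disjoint A & B] -> p (A :|: B) = p A + p B].

Local Open Scope classical_set_scope.

Definition expect (p : {set Omega} -> R) (f : Omega -> \bar R) : \bar R :=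
  (\sum_(w : Omega | p [set w]%SET != 0%R) (p [set w]%SET)%:E * f w)%E.

Definition finite_score (f : Omega -> \bar R) : Prop :=
  forall w, f w \is a fin_num.

Definition dotp (f g : Omega -> R) : R := \sum_w f w * g w.

Definition conv_hull (F : set {ptws Omega -> R}) : set {ptws Omega -> R} :=
  [set z | exists (n : nat) (l : 'I_n -> R) (x : 'I_n -> (Omega -> R)),
     [/\ forall i, 0 <= l i, \sum_i l i = 1, forall i, F (x i) &
         z = fun w => \sum_i l i * x i w]].

Definition boundary (G : set {ptws Omega -> R}) : set {ptws Omega -> R} :=
  closure G `\` interior G.

Definition pos_boundary (G : set {ptws Omega -> R}) : set {ptws Omega -> R} :=
  [set z | boundary G z /\
     exists v : Omega -> R, (forall w, 0 < v w) /\
       (forall x, G x -> dotp v x <= dotp v z)].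

Definition dense_in (F B : set {ptws Omega -> R}) : Prop :=
  forall O, open O -> O `&` B !=set0 -> O `&` F !=set0.

End Defs.

(* Testing quasi-strict propriety against the zero function, which is not a
   probability, gives E_p s(p) > -oo; since s <= M, the expected score
   G(p) = E_p s(p) is finite and s(p) is finite on the support of p, so the
   first alternative never occurs.
   (i) G(p_n) >= E_{p_n} s(p_N) --> E_p s(p_N) --> G(p) bounds G(p_n) from
   below; from above, G(p_n) = E_p s(p_n) + E_{p_n - p} s(p_n), where the first
   term is at most G(p) and the second vanishes because s <= M off the support
   of p and s(p_n) converges on it.
   (ii) Let z be a positive-facing boundary point of Conv F with normal v, and
   q = v / |v|. On the closure of Conv F every probability r satisfies
   <r, .> <= G(r), while <q, z> >= G(q). Comparing z with the score of
   q + t(1_a - 1_b) and letting t -> 0+ gives z_a - z_b <= s(q)_a - s(q)_b for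
   all a, b, so z - s(q) is a constant, which must be 0: z = s(q) lies in F. *)

From HB Require Import structures.
From mathcomp Require Import all_boot all_order all_algebra.
From mathcomp Require Import all_classical all_reals all_analysis.
From mathcomp Require Import ring lra.

Set Implicit Arguments.
Unset Strict Implicit.
Unset Printing Implicit Defensive.
Import Order.TTheory GRing.Theory Num.Theory.
Import numFieldNormedType.Exports.
Local Open Scope classical_set_scope.
Local Open Scope ring_scope.

Lemma ptws_cvgP (I : eqType) (K : topologicalType) (T : Type)
    (F : set_system T) {FF : Filter F} (g : T -> {ptws I -> K}) (f : {ptws I -> K}) :
  g @ F --> f <-> forall i, (fun t => g t i) @ F --> f i.
Proof.
split=> [gf i|gf].
  exact: cvg_trans (cvg_app _ gf) (@proj_continuous I (fun=> K) i f).
apply/cvg_sup => i U [V] [[W] oW <-] Wfi WU.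
by apply: (filterS WU); apply: gf; exact: open_nbhs_nbhs.
Qed.

Lemma cvg_sumr (R : numFieldType) (I T : Type) (F : set_system T) {FF : Filter F}
    (r : seq I) (P : pred I) (f : I -> T -> R) (a : I -> R) :
  (forall i, P i -> f i @ F --> a i) ->
  (fun x => \sum_(i <- r | P i) f i x) @ F --> \sum_(i <- r | P i) a i.
Proof. by move=> fa; apply: (@cvg_big R^o) => //; exact: add_continuous. Qed.

Section DotProduct.
Variables (R : realType) (Omega : finType).
Implicit Types (u x y : Omega -> R) (F : set {ptws Omega -> R}).

Lemma dotp_scalel (k : R) u x : dotp (fun w => k * u w) x = k * dotp u x.
Proof. by rewrite /dotp mulr_sumr; apply: eq_bigr => w _; rewrite mulrA. Qed.

Lemma dotp_cst1 u : dotp u (fun=> 1) = \sum_w u w.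
Proof. by apply: eq_bigr => w _; rewrite mulr1. Qed.

Lemma increments_le_eq u x y : \sum_w u w = 1 -> dotp u x = dotp u y ->
  (forall a b, x a - x b <= y a - y b) -> x = y.
Proof.
move=> u1 uxy le_xy; apply: funext => a.
have gapE b : y b - x b = y a - x a by have := le_xy a b; have := le_xy b a; lra.
have : dotp u y - dotp u x = y a - x a.
  rewrite /dotp -sumrB -[RHS]mul1r -u1 mulr_suml.
  by apply: eq_bigr => b _; rewrite -(gapE b); ring.
by rewrite uxy subrr; lra.
Qed.

Definition move_mass u (a b : Omega) (t : R) : Omega -> R :=
  fun w => u w + t * ((w == a)%:R - (w == b)%:R).

Lemma dotp_move_mass u a b t y :
  dotp (move_mass u a b t) y = dotp u y + t * (y a - y b).
Proof.
rewrite /dotp /move_mass; under eq_bigr do rewrite mulrDl.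
rewrite big_split /=; congr (_ + _).
under eq_bigr do rewrite -mulrA mulrBl.
rewrite -mulr_sumr sumrB; congr (t * (_ - _)).
- by rewrite (bigD1 a) //= eqxx mul1r big1 ?addr0 // => w /negbTE ->; rewrite mul0r.
- by rewrite (bigD1 b) //= eqxx mul1r big1 ?addr0 // => w /negbTE ->; rewrite mul0r.
Qed.

Lemma sum_move_mass u a b t : \sum_w move_mass u a b t w = \sum_w u w.
Proof. by rewrite -!dotp_cst1 dotp_move_mass subrr mulr0 addr0. Qed.

Lemma move_mass_gt0 u a b t w : (forall w, 0 < u w) -> 0 <= t < u b ->
  0 < move_mass u a b t w.
Proof.
move=> u0 /andP[t0 tb]; have := u0 w; rewrite /move_mass.
have [->|wa] := eqVneq w a.
  by have [->|_] := eqVneq a b; rewrite ?eqxx /=; lra.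
by have [->|_] := eqVneq w b; rewrite ?eqxx /=; lra.
Qed.

Lemma dotp_continuous u : continuous (dotp u : {ptws Omega -> R} -> R).
Proof.
move=> y; have Fy : Filter (nbhs y) by exact: nbhs_filter.
apply: (cvg_sumr (FF := Fy)) => w _; apply: cvgMr.
by move/(ptws_cvgP (FF := Fy))/(_ w): (@cvg_id _ (nbhs y)).
Qed.

Lemma cvg_dotp_support (T : Type) (G : set_system T) {FG : Filter G} u
    (c : T -> Omega -> R) y :
  (forall w, u w != 0 -> (fun t => c t w) @ G --> y w) ->
  (fun t => dotp u (c t)) @ G --> dotp u y.
Proof.
move=> cy; apply: cvg_sumr => w _.
have [->|uw] := eqVneq (u w) 0; last exact: cvgMr (cy w uw).
by rewrite mul0r; under eq_cvg do rewrite mul0r; exact: cvg_cst.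
Qed.

Lemma cvg_dotpl (T : Type) (G : set_system T) {FG : Filter G}
    (c : T -> Omega -> R) u y :
  (forall w, (fun t => c t w) @ G --> u w) -> (fun t => dotp (c t) y) @ G --> dotp u y.
Proof. by move=> cu; apply: cvg_sumr => w _; apply: cvgMl. Qed.

Lemma closed_dotp_le u (c : R) : closed [set y : {ptws Omega -> R} | dotp u y <= c].
Proof.
have := @preimage_closed _ R (dotp u : {ptws Omega -> R} -> R) [set x | x <= c].
by apply=> [y _|]; [exact: dotp_continuous | exact: closed_le].
Qed.

Lemma sub_conv_hull F : F `<=` conv_hull F.
Proof.
move=> x Fx; exists 1%N, (fun=> 1), (fun=> x); split=> //.
- by rewrite big_ord1.
- by apply: funext => w; rewrite big_ord1 mul1r.
Qed.

Lemma conv_hull_neq0 F : conv_hull F !=set0 -> F !=set0.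
Proof.
case=> _ [[|n] [l [x [_ l1 Fx _]]]]; last by exists (x ord0).
by move/eqP: l1; rewrite big_ord0 eq_sym oner_eq0.
Qed.

Lemma conv_hull_dotp_le F u (c : R) :
  (forall x, F x -> dotp u x <= c) ->
  conv_hull F `<=` [set y : {ptws Omega -> R} | dotp u y <= c].
Proof.
move=> Fc _ [n [l [x [l0 l1 Fx ->]]]] /=.
have -> : dotp u (fun w => \sum_i l i * x i w) = \sum_i l i * dotp u (x i).
  rewrite /dotp; under eq_bigr do rewrite mulr_sumr.
  by rewrite exchange_big /=; apply: eq_bigr => i _; rewrite mulr_sumr;
    apply: eq_bigr => w _; rewrite mulrCA.
rewrite -[c]mul1r -l1 mulr_suml; apply: ler_sum => i _.
by apply: ler_wpM2l; [exact: l0 | exact: Fc].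
Qed.

Lemma closure_conv_hull_dotp_le F u (c : R) :
  (forall x, F x -> dotp u x <= c) ->
  closure (conv_hull F) `<=` [set y : {ptws Omega -> R} | dotp u y <= c].
Proof.
move=> Fc; apply: subset_trans (closureS (conv_hull_dotp_le Fc)) _.
exact: closed_dotp_le.
Qed.

Lemma sub_dense_in F (B : set {ptws Omega -> R}) : B `<=` F -> dense_in F B.
Proof. by move=> BF O _ [z [Oz /BF Fz]]; exists z. Qed.

End DotProduct.

Section FiniteProbability.
Variables (R : realType) (Omega : finType).
Implicit Types (p : {set Omega} -> R) (u : Omega -> R).

Definition pmf p : Omega -> R := fun w => p [set w]%SET.

Definition prob_of_weights u : {ptws {set Omega} -> R} :=
  fun A => \sum_(w in A) u w.

Lemma pmf_prob_of_weights u : pmf (prob_of_weights u) = u.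
Proof. by apply: funext => w; rewrite /pmf /prob_of_weights big_set1. Qed.

Lemma is_prob_weights u : (forall w, 0 <= u w) -> \sum_w u w = 1 ->
  is_prob (prob_of_weights u).
Proof.
move=> u0 u1; split.
- by move=> A; apply: sumr_ge0.
- by rewrite -u1; apply: eq_bigl => w; rewrite inE.
- move=> A B AB; rewrite /prob_of_weights -bigU //=.
  by apply: eq_bigl => w; rewrite !inE.
Qed.

Lemma pmf_ge0 p w : is_prob p -> 0 <= pmf p w.
Proof. by case=> + _ _; apply. Qed.

Lemma prob_of_pmf p : is_prob p -> prob_of_weights (pmf p) = p.
Proof.
case=> _ _ padd; have p0 : p finset.set0 = 0.
  have := padd finset.set0 finset.set0.
  by rewrite finset.setU0 finset.disjoints_subset finset.sub0set => /(_ isT); lra.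
apply: funext => A; elim: {A}#|A| {-2}A (erefl #|A|) => [|n IH] A.
  by move/eqP; rewrite cards_eq0 => /eqP ->; rewrite /prob_of_weights big_set0 p0.
case: (set_0Vmem A) => [->|[x xA]]; first by rewrite cards0.
rewrite (cardsD1 x) xA add1n => -[/IH IHA].
move: IHA; rewrite /prob_of_weights (big_setD1 x xA) /= => ->.
by rewrite -padd ?finset.setD1K // disjoints1 !inE eqxx.
Qed.

Lemma sum_pmf p : is_prob p -> \sum_w pmf p w = 1.
Proof.
move=> pp; case: (pp) => _ pT _.
have := congr1 (fun q => q [set: Omega]%SET) (prob_of_pmf pp).
by rewrite /= pT /prob_of_weights => <-; apply: eq_bigl => w; rewrite inE.
Qed.

Lemma prob_support_neq0 p : is_prob p -> exists w, pmf p w != 0.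
Proof.
move=> /sum_pmf p1; have [w pw|p0] := pickP (fun w => pmf p w != 0); first by exists w.
move: p1; rewrite big1 => [/eqP|w]; first by rewrite eq_sym oner_eq0.
by move/negbFE/eqP: (p0 w).
Qed.

Lemma not_is_prob0 : ~ is_prob (fun _ : {set Omega} => 0 : R).
Proof. by case=> _ /eqP; rewrite eq_sym oner_eq0. Qed.

Lemma expect_fine p (f : Omega -> \bar R) :
  (forall w, pmf p w != 0 -> f w \is a fin_num) ->
  expect p f = (dotp (pmf p) (fine \o f))%:E.
Proof.
move=> ffin; rewrite /expect (eq_bigr (fun w => (pmf p w * fine (f w))%:E)).
  by rewrite sumEFin big_mkcond /=; congr (_%:E); apply: eq_bigr => w _;
    case: ifPn => // /negbNE/eqP; rewrite /pmf => ->; rewrite mul0r.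
by move=> w /ffin fw; rewrite EFinM fineK.
Qed.

Lemma cvg_prob_of_weights (T : Type) (G : set_system T) {FG : Filter G}
    (c : T -> Omega -> R) u :
  (forall w, (fun t => c t w) @ G --> u w) ->
  (fun t => prob_of_weights (c t)) @ G --> prob_of_weights u.
Proof. by move=> cu; apply/ptws_cvgP => A; apply: cvg_sumr => w _. Qed.

Lemma cvg_prob (T : Type) (G : set_system T) {FG : Filter G}
    (pt : T -> {ptws {set Omega} -> R}) (p : {ptws {set Omega} -> R}) :
  (forall t, is_prob (pt t)) -> is_prob p ->
  (forall w, (fun t => pmf (pt t) w) @ G --> pmf p w) -> pt @ G --> p.
Proof.
move=> ptp pp /cvg_prob_of_weights; rewrite (prob_of_pmf pp).
by under eq_cvg do rewrite prob_of_pmf //.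
Qed.

Definition shift_prob (q : {set Omega} -> R) (a b : Omega) (t : R) :=
  prob_of_weights (move_mass (pmf q) a b t).

Lemma pmf_shift_prob q a b t : pmf (shift_prob q a b t) = move_mass (pmf q) a b t.
Proof. exact: pmf_prob_of_weights. Qed.

Lemma is_prob_shift q a b t : is_prob q -> (forall w, 0 < pmf q w) ->
  0 <= t < pmf q b -> is_prob (shift_prob q a b t).
Proof.
move=> qp q_gt0 ht; apply: is_prob_weights => [w|].
  exact/ltW/move_mass_gt0.
by rewrite sum_move_mass sum_pmf.
Qed.

Lemma cvg_shift_prob (q : {ptws {set Omega} -> R}) a b :
  is_prob q -> shift_prob q a b t @[t --> (0 : R)] --> q.
Proof.
move=> qp; rewrite -[X in _ --> X](prob_of_pmf qp).
have -> : pmf q = move_mass (pmf q) a b 0.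
  by apply: funext => w; rewrite /move_mass mul0r addr0.
apply: cvg_prob_of_weights => w; apply: cvgD; first exact: cvg_cst.
by apply: cvgMl; exact: cvg_id.
Qed.

End FiniteProbability.

Section ScoringRule.
Variables (R : realType) (Omega : finType) (M : R).
Variable s : {ptws {set Omega} -> R} -> {ptws Omega -> \bar R}.
Implicit Types (p c r : {ptws {set Omega} -> R}).
Hypothesis s_le_M : forall c w, (s c w <= M%:E)%E.
Hypothesis s_proper : forall p c, is_prob p -> (expect p (s c) <= expect p (s p))%E.
Hypothesis s_quasi_strict : forall p c, is_prob p -> ~ is_prob c ->
  (expect p (s c) < expect p (s p))%E.
Hypothesis s_cont : continuous s.

Definition exp_score p : R := dotp (pmf p) (fine \o s p).

Lemma score_fin_num p w : is_prob p -> pmf p w != 0 -> s p w \is a fin_num.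
Proof.
move=> pp pw; have pw_gt0 : 0 < pmf p w by rewrite lt0r pw pmf_ge0.
have : (expect p (s p) != -oo)%E.
  apply/eqP => Ep; have := s_quasi_strict pp (@not_is_prob0 R Omega).
  by rewrite Ep ltNge leNye.
rewrite /expect esum_eqNy => /existsPn /(_ w); rewrite unfold_in pw /=.
have := s_le_M p w; case: (s p w) => [r| |] //=.
by rewrite gt0_muleNy ?lte_fin // eqxx.
Qed.

Lemma expect_score p : is_prob p -> expect p (s p) = (exp_score p)%:E.
Proof. by move=> pp; apply: expect_fine => w; exact: score_fin_num. Qed.

Lemma dotp_score_le p c : is_prob p -> finite_score (s c) ->
  dotp (pmf p) (fine \o s c) <= exp_score p.
Proof.
move=> pp sc; rewrite -lee_fin -expect_score // -expect_fine; first exact: s_proper.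
by move=> w _; exact: sc.
Qed.

Lemma fine_score_le c w : s c w \is a fin_num -> fine (s c w) <= M.
Proof. by move=> scw; rewrite -lee_fin fineK. Qed.

Lemma cvg_fine_score (T : Type) (G : set_system T) {FG : Filter G}
    (pt : T -> {ptws {set Omega} -> R}) p w :
  pt @ G --> p -> s p w \is a fin_num ->
  (fun t => fine (s (pt t) w)) @ G --> fine (s p w).
Proof.
move=> pt_p spw; apply: fine_cvg; rewrite fineK //.
have spt : (fun t => s (pt t)) @ G --> s p := continuous_cvg FG (@s_cont p) pt_p.
by move/ptws_cvgP: spt; apply.
Qed.

Section ExpScoreContinuity.
Variables (pn : nat -> {ptws {set Omega} -> R}) (p : {ptws {set Omega} -> R}).
Hypotheses (pn_prob : forall n, is_prob (pn n)) (p_prob : is_prob p).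
Hypothesis pn_p : forall w, (fun n => pmf (pn n) w) @ \oo --> pmf p w.
Hypothesis pn_fin : forall n, finite_score (s (pn n)).

Lemma exp_score_ge_near e : 0 < e ->
  \forall n \near \oo, exp_score p - e <= exp_score (pn n).
Proof.
move=> e0; have pn_p' : pn @ \oo --> p by exact: cvg_prob.
have p_sN : (fun N => dotp (pmf p) (fine \o s (pn N))) @ \oo --> exp_score p.
  apply: cvg_dotp_support => w pw.
  exact: cvg_fine_score pn_p' (score_fin_num p_prob pw).
have [N _ /(_ N (leqnn N)) sN_ge] := cvgr_ge _ p_sN (exp_score p - e / 2) ltac:(lra).
have pn_sN : (fun n => dotp (pmf (pn n)) (fine \o s (pn N))) @ \oo
    --> dotp (pmf p) (fine \o s (pn N)) by exact: cvg_dotpl.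
have := cvgr_ge _ pn_sN (dotp (pmf p) (fine \o s (pn N)) - e / 2) ltac:(lra).
by apply: filterS => n; have := dotp_score_le (pn_prob n) (pn_fin N); lra.
Qed.

Lemma exp_score_le_near e : 0 < e ->
  \forall n \near \oo, exp_score (pn n) <= exp_score p + e.
Proof.
move=> e0; have pn_p' : pn @ \oo --> p by exact: cvg_prob.
pose u n w := if pmf p w == 0 then pmf (pn n) w * M
              else (pmf (pn n) w - pmf p w) * fine (s (pn n) w).
have u_cvg0 : (fun n => \sum_w u n w) @ \oo --> \sum_(w : Omega) (0 : R).
  apply: cvg_sumr => w _; rewrite /u; case: eqP => [pw0|/eqP pw].
    by rewrite -(mul0r M) -pw0; apply: cvgMl.
  rewrite -(mul0r (fine (s p w))) -(subrr (pmf p w)); apply: cvgM.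
    by apply: cvgB; [exact: pn_p | exact: cvg_cst].
  exact: cvg_fine_score pn_p' (score_fin_num p_prob pw).
have pn_le n : exp_score (pn n) <= exp_score p + \sum_w u n w.
  have -> : exp_score (pn n) = dotp (pmf p) (fine \o s (pn n))
      + \sum_w (pmf (pn n) w - pmf p w) * fine (s (pn n) w).
    by rewrite /exp_score /dotp -big_split /=; apply: eq_bigr => w _; ring.
  apply: lerD; first exact: dotp_score_le.
  apply: ler_sum => w _; rewrite /u; case: eqP => [->|_] //.
  by rewrite subr0; apply: ler_wpM2l; [exact: pmf_ge0 | exact/fine_score_le/pn_fin].
rewrite big1_eq in u_cvg0.
have u_le : \forall n \near \oo, \sum_w u n w <= e by exact: cvgr_le u_cvg0 _ e0.
by apply: filterS u_le => n; have := pn_le n; lra.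
Qed.

Lemma exp_score_cvg : exp_score (pn n) @[n --> \oo] --> exp_score p.
Proof.
apply/cvgrPdist_le => e e0.
apply: filterS2 (exp_score_ge_near e0) (exp_score_le_near e0) => n lo hi.
by rewrite ler_norml; apply/andP; split; lra.
Qed.

End ExpScoreContinuity.

Definition finite_scores : set {ptws Omega -> R} :=
  [set f | exists p : {ptws {set Omega} -> R},
     [/\ is_prob p, finite_score (s p) & f = (fun w => fine (s p w))]].

Lemma closure_hull_dotp_le r : is_prob r ->
  closure (conv_hull finite_scores) `<=` [set y | dotp (pmf r) y <= exp_score r].
Proof.
by move=> rp; apply: closure_conv_hull_dotp_le => _ [c [_ sc ->]]; exact: dotp_score_le.
Qed.

Lemma score_increment_ge (q : {ptws {set Omega} -> R}) (z : Omega -> R) a b :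
  is_prob q -> (forall w, 0 < pmf q w) ->
  (forall r, is_prob r -> dotp (pmf r) z <= exp_score r) ->
  exp_score q <= dotp (pmf q) z ->
  z a - z b <= fine (s q a) - fine (s q b).
Proof.
move=> qp q_gt0 z_le z_ge.
have r_fin t : 0 <= t < pmf q b -> finite_score (s (shift_prob q a b t)).
  move=> ht w; apply: score_fin_num; first exact: is_prob_shift.
  by rewrite pmf_shift_prob gt_eqF // move_mass_gt0.
have incr_le t : 0 < t < pmf q b ->
    z a - z b <= fine (s (shift_prob q a b t) a) - fine (s (shift_prob q a b t) b).
  move=> /andP[t0 tb]; have ht : 0 <= t < pmf q b by rewrite tb ltW.
  have sr_le := dotp_score_le qp (r_fin t ht).
  have : dotp (pmf (shift_prob q a b t)) z
      <= dotp (pmf (shift_prob q a b t)) (fine \o s (shift_prob q a b t)).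
    exact: z_le (is_prob_shift a qp q_gt0 ht).
  rewrite pmf_shift_prob !dotp_move_mass /= => zr_le.
  by rewrite -(ler_pM2l t0); lra.
have incr_cvg : fine (s (shift_prob q a b t) a) - fine (s (shift_prob q a b t) b)
    @[t --> (0 : R)^'+] --> fine (s q a) - fine (s q b).
  apply: cvg_at_right_filter; apply: cvgB;
    apply: cvg_fine_score (cvg_shift_prob a b qp) _;
    exact: score_fin_num qp (lt0r_neq0 (q_gt0 _)).
apply: cvgr_to_ge incr_cvg _; near=> t; apply: incr_le; apply/andP; split.
  by near: t; exact: nbhs_right_gt.
by near: t; exact: nbhs_right_lt.
Unshelve. all: by end_near.
Qed.

Lemma pos_boundary_sub_finite_scores :
  pos_boundary (conv_hull finite_scores) `<=` finite_scores.
Proof.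
move=> z [[z_cl _] [v [v_gt0 v_max]]].
have [x [hull_x _]] := z_cl setT filterT.
have [_ [p [pp _ _]]] := conv_hull_neq0 (ex_intro _ x hull_x).
have [w0 _] := prob_support_neq0 pp.
pose V := \sum_w v w; have V_gt0 : 0 < V.
  rewrite /V (bigD1 w0) //=; apply: ltr_pwDl (v_gt0 w0) _.
  by apply: sumr_ge0 => w _; exact/ltW/v_gt0.
pose q := prob_of_weights (fun w => V^-1 * v w).
have pmf_q : pmf q = (fun w => V^-1 * v w) := pmf_prob_of_weights _.
have q_gt0 w : 0 < pmf q w by rewrite pmf_q mulr_gt0 ?invr_gt0.
have qp : is_prob q.
  apply: is_prob_weights => [w|]; first by have := q_gt0 w; rewrite pmf_q => /ltW.
  by rewrite -mulr_sumr mulVf // gt_eqF.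
have q_fin : finite_score (s q).
  by move=> w; exact: score_fin_num qp (lt0r_neq0 (q_gt0 w)).
have z_le r : is_prob r -> dotp (pmf r) z <= exp_score r.
  by move=> rp; exact: closure_hull_dotp_le rp z z_cl.
have z_ge : exp_score q <= dotp (pmf q) z.
  rewrite /exp_score pmf_q !dotp_scalel ler_pM2l ?invr_gt0 //.
  by apply: v_max; apply: sub_conv_hull; exists q.
exists q; split => //; apply: increments_le_eq (sum_pmf qp) _ _.
  by apply/eqP; rewrite eq_le z_le.
by move=> a b; exact: score_increment_ge.
Qed.

End ScoringRule.

Theorem proposition2 (R : realType) (Omega : finType) (M : R)
  (s : {ptws {set Omega} -> R} -> {ptws Omega -> \bar R})
  (s_le_M : forall c w, (s c w <= M%:E)%E)
  (s_proper : forall (p c : {ptws {set Omega} -> R}), is_prob p ->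
     (expect p (s c) <= expect p (s p))%E)
  (s_quasi_strict : forall (p c : {ptws {set Omega} -> R}), is_prob p -> ~ is_prob c ->
     (expect p (s c) < expect p (s p))%E)
  (s_cont : continuous s) :
  (exists p : {ptws {set Omega} -> R}, is_prob p /\ ~ (expect p (s p) \is a fin_num)) \/
  ((forall (pn : nat -> {ptws {set Omega} -> R}) (p : {ptws {set Omega} -> R}),
      (forall n, is_prob (pn n)) -> is_prob p ->
      (forall w, (fun n => pn n [set w]%SET) @ \oo --> p [set w]%SET) ->
      (forall n, finite_score (s (pn n))) -> ~ finite_score (s p) ->
      (fun n => expect (pn n) (s (pn n))) @ \oo --> expect p (s p)) /\
   (let F : set {ptws Omega -> R} :=
      [set f | exists p : {ptws {set Omega} -> R}, [/\ is_prob p, finite_score (s p) &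
                 f = (fun w => fine (s p w))]] in
    dense_in F (pos_boundary (conv_hull F)))).
Proof.
right; split=> [pn p pn_prob p_prob pn_p pn_fin _|].
  (* the convergence holds whether or not [s p] is finite *)
  rewrite (expect_score s_le_M s_quasi_strict p_prob).
  under eq_cvg do rewrite (expect_score s_le_M s_quasi_strict (pn_prob _)).
  apply: cvg_EFin; first exact: nearW.
  exact: exp_score_cvg.
apply: sub_dense_in; exact: pos_boundary_sub_finite_scores.
Qed.
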